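(* Let $I$ be a set and $\mathcal{E}=(E_i)_{i\in I}$ a family of nonempty sets. Then there exists a choice of the sets $E_i$ (i.e. a family $\mathcal{E}=(E_i)_{i\in I}$ of nonempty sets) such that for every integral connective structure $\mathcal{K}$ on $I$ there exists a multiple relation $R$ in $\mathcal{E}$ whose connective structure satisfies $\mathcal{K}_R=\mathcal{K}$.
   Context: For $J\subseteq I$ let $Z_J=\prod_{j\in J}E_j$ (its elements, the $J$-families, are maps $x:J\to\bigcup_i E_i$ with $x_j\in E_j$; $Z_\emptyset=\{\bullet\}$). A multiple relation in $\mathcal{E}$ is a pair $R=(J_R,G_R)$ with $J_R\subseteq I$ (the domain) and $G_R\subseteq Z_{J_R}$ (the graph); write $x\in R$ for $x\in G_R$. For $K\subseteq J_R$ the restriction is $R_{|K}=(K,\{x_{|K}:x\in G_R\})$, where $x_{|K}$ is the restriction of the map $x$ to $K$. The product of relations is $R\bowtie S=(J_R\cup J_S,\{x\in Z_{J_R\cup J_S}: x_{|J_R}\in G_R,\ x_{|J_S}\in G_S\})$. A bipartition of a set $J$ is a pair $(K,L)$ of nonempty disjoint subsets with $K\cup L=J$. A relation $T$ is scindable (splittable) if there is a bipartition $(K,L)$ of $J_T$ and relations $R,S$ with $J_R=K$, $J_S=L$ and $T=R\bowtie S$. A subset $J\subseteq J_R$ is scindable for $R$ if $R_{|J}$ is scindable. The connective structure of $R$ is $\mathcal{K}_R=\{J\subseteq J_R : J \text{ is not scindable for } R\}$. A connective structure on a set $X$ is a set $\mathcal{K}$ of subsets of $X$ such that for every $\mathcal{I}\subseteq\mathcal{K}$,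 if $\bigcap_{K\in\mathcal{I}}K\neq\emptyset$ then $\bigcup_{K\in\mathcal{I}}K\in\mathcal{K}$ (in particular $\emptyset\in\mathcal{K}$); it is integral if $\{x\}\in\mathcal{K}$ for all $x\in X$. The axiom of choice is not assumed. *)

Set Implicit Arguments.
Unset Strict Implicit.

Section MultipleRelations.
Variables (I : Type) (E : I -> Type).

(* A (partial) family: a map defined on some subset of I with x_i in E_i.
   The J-families (elements of Z_J) are those defined exactly on J. *)
Definition family := forall i : I, option (E i).

Definition inZ (J : I -> Prop) (x : family) : Prop :=
  forall i, J i <-> x i <> None.

Record mrel := MRel { rdom : I -> Prop; rgraph : family -> Prop }.

Definition wf (R : mrel) : Prop :=
  forall x, rgraph R x -> inZ (rdom R) x.

Definition isRestr (K : I -> Prop) (x y : family) : Prop :=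
  forall i, (K i -> y i = x i) /\ (~ K i -> y i = None).

Definition restr (R : mrel) (K : I -> Prop) : mrel :=
  MRel K (fun y => exists x, rgraph R x /\ isRestr K x y).

Definition rprod (R S : mrel) : mrel :=
  MRel (fun i => rdom R i \/ rdom S i)
       (fun x => inZ (fun i => rdom R i \/ rdom S i) x
                 /\ (exists y, isRestr (rdom R) x y /\ rgraph R y)
                 /\ (exists z, isRestr (rdom S) x z /\ rgraph S z)).

Definition req (R S : mrel) : Prop :=
  (forall i, rdom R i <-> rdom S i) /\ (forall x, rgraph R x <-> rgraph S x).

Definition bipartition (J K L : I -> Prop) : Prop :=
  (exists i, K i) /\ (exists i, L i) /\ (forall i, ~ (K i /\ L i)) /\
  (forall i, J i <-> K i \/ L i).

Definition scindable (T : mrel) : Prop :=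
  exists K L : I -> Prop, bipartition (rdom T) K L /\
    exists R S : mrel, wf R /\ wf S /\
      (forall i, rdom R i <-> K i) /\ (forall i, rdom S i <-> L i) /\
      req T (rprod R S).

Definition scindable_for (R : mrel) (J : I -> Prop) : Prop :=
  scindable (restr R J).

Definition conn_struct (R : mrel) (J : I -> Prop) : Prop :=
  (forall i, J i -> rdom R i) /\ ~ scindable_for R J.

End MultipleRelations.

(* connective structure on the whole set I (empty set required explicitly,
   as in the paper's "in particular ∅ ∈ K") *)
Definition connective_structure (I : Type) (K : (I -> Prop) -> Prop) : Prop :=
  K (fun _ => False) /\
  forall F : (I -> Prop) -> Prop,
    (forall A, F A -> K A) ->
    (exists x, forall A, F A -> A x) ->
    K (fun x => exists A, F A /\ A x).

Definition integral (I : Type) (K : (I -> Prop) -> Prop) : Prop :=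
  forall x : I, K (fun y => y = x).

(* Take E_i to be the sets of subsets of I: a family x then lets each i "vote"
   for the subsets A with A ∈ x_i.  Given K, the relation R consists of the
   I-families in which no nonempty member A of K is voted for unanimously by
   its own elements.  Restricting R to J gives the same condition for the
   members of K inside J.  If J ∉ K, the K-component C of a point of J and the
   rest J \ C split J, and every member of K inside J lies on one side, so
   R_{|J} = R_{|C} ⋈ R_{|J\C}.  If J ∈ K and J = P ⊔ Q, the family where
   exactly the points of P vote for J lies in R_{|J}, as does the one where the
   points of Q vote; a product would also contain their mix, where all of J
   votes for J. *)

From Stdlib Require Import Classical ClassicalEpsilon FunctionalExtensionality PropExtensionality.

Set Implicit Arguments.

Lemma set_ext (I : Type) (A B : I -> Prop) : (forall i, A i <-> B i) -> A = B.
Proof.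
  intro AB; extensionality i; apply propositional_extensionality, AB.
Qed.

Lemma rprod_mix (I : Type) (E : I -> Type) (R S : mrel E) (x x' w : family E) :
  rgraph (rprod R S) x -> rgraph (rprod R S) x' ->
  inZ (fun i => rdom R i \/ rdom S i) w ->
  (forall i, rdom R i -> w i = x i) -> (forall i, rdom S i -> w i = x' i) ->
  rgraph (rprod R S) w.
Proof.
  intros [_ [[y [xy Ry]] _]] [_ [_ [z [x'z Sz]]]] Zw wx wx'.
  split; [exact Zw | split].
  - exists y; split; [| exact Ry].
    intro i; destruct (xy i) as [xyR xyN].
    split; [intro Ri; rewrite (wx i Ri); exact (xyR Ri) | exact xyN].
  - exists z; split; [| exact Sz].
    intro i; destruct (x'z i) as [x'zS x'zN].
    split; [intro Si; rewrite (wx' i Si); exact (x'zS Si) | exact x'zN].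
Qed.

Section ConnectiveStructure.
Variables (I : Type) (K : (I -> Prop) -> Prop).
Hypothesis K_cs : connective_structure K.

Lemma cs_empty (A : I -> Prop) : (forall i, ~ A i) -> K A.
Proof.
  intro A0; replace A with (fun _ : I => False) by (apply set_ext; firstorder).
  apply K_cs.
Qed.

Lemma cs_union2 (A B : I -> Prop) :
  K A -> K B -> (exists x, A x /\ B x) -> K (fun x => A x \/ B x).
Proof.
  intros KA KB [x [Ax Bx]].
  set (F := fun C : I -> Prop => C = A \/ C = B).
  replace (fun x => A x \/ B x) with (fun x => exists C, F C /\ C x).
  - apply (proj2 K_cs); [intros C [-> | ->]; assumption |].
    exists x; intros C [-> | ->]; assumption.
  - apply set_ext; intro i; split.
    + intros [C [[-> | ->] Ci]]; tauto.
    + intros [Ai | Bi]; [exists A | exists B]; unfold F; tauto.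
Qed.

Variables (J : I -> Prop) (x0 : I).

Definition component : I -> Prop :=
  fun x => exists A, (K A /\ A x0 /\ forall i, A i -> J i) /\ A x.

Lemma component_in_K : K component.
Proof.
  apply (proj2 K_cs).
  - intros A [KA _]; exact KA.
  - exists x0; intros A [_ [Ax0 _]]; exact Ax0.
Qed.

Lemma component_sub i : component i -> J i.
Proof. intros [A [[_ [_ AJ]] Ai]]; exact (AJ i Ai). Qed.

Lemma component_absorb (A : I -> Prop) (a : I) :
  K A -> (forall i, A i -> J i) -> A a -> component a ->
  forall i, A i -> component i.
Proof.
  intros KA AJ Aa Ca i Ai.
  exists (fun x => A x \/ component x); split; [| now left].
  split; [| split].
  - apply cs_union2; [exact KA | exact component_in_K | exists a; split; assumption].
  - right; destruct Ca as [B [HB _]].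
    exists B; split; [exact HB | exact (proj1 (proj2 HB))].
  - intros j [Aj | Cj]; [exact (AJ j Aj) | exact (component_sub Cj)].
Qed.

Lemma component_separates (A : I -> Prop) : K A -> (forall i, A i -> J i) ->
  (forall i, A i -> component i) \/ (forall i, A i -> J i /\ ~ component i).
Proof.
  intros KA AJ.
  destruct (classic (exists a, A a /\ component a)) as [[a [Aa Ca]] | disj].
  - left; exact (component_absorb KA AJ Aa Ca).
  - right; intros i Ai; split; [exact (AJ i Ai) | intro Ci; apply disj; now exists i].
Qed.

Hypothesis K_int : integral K.

Lemma component_mem : J x0 -> component x0.
Proof.
  intro Jx0; exists (fun y => y = x0); split; [| reflexivity].
  split; [apply K_int | split; [reflexivity | now intros i ->]].
Qed.

End ConnectiveStructure.

Definition ballot (I : Type) : I -> Type := fun _ => (I -> Prop) -> Prop.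
Arguments ballot : clear implicits.

Section Votes.
Variables (I : Type) (K : (I -> Prop) -> Prop).

Definition votes (y : family (ballot I)) (i : I) (A : I -> Prop) : Prop :=
  exists v, y i = Some v /\ v A.

Definition unanimous (y : family (ballot I)) (A : I -> Prop) : Prop :=
  forall i, A i -> votes y i A.

Definition admissible (J : I -> Prop) (y : family (ballot I)) : Prop :=
  inZ J y /\ forall A, K A -> (exists i, A i) -> (forall i, A i -> J i) -> ~ unanimous y A.

Definition vote_rel_on (J : I -> Prop) : mrel (ballot I) := MRel J (admissible J).

Definition vote_rel : mrel (ballot I) := vote_rel_on (fun _ => True).

Lemma vote_rel_on_wf (J : I -> Prop) : wf (vote_rel_on J).
Proof. intros y [Zy _]; exact Zy. Qed.

Lemma unanimous_restr (D : I -> Prop) {A : I -> Prop} (y z : family (ballot I)) :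
  isRestr D y z -> (forall i, A i -> D i) -> (unanimous y A <-> unanimous z A).
Proof.
  intros yz AD; split; intros H i Ai; specialize (H i Ai); unfold votes in *;
    rewrite (proj1 (yz i) (AD i Ai)) in *; exact H.
Qed.

Definition restrict (D : I -> Prop) (y : family (ballot I)) : family (ballot I) :=
  fun i => if excluded_middle_informative (D i) then y i else None.

Lemma restrict_isRestr (D : I -> Prop) (y : family (ballot I)) :
  isRestr D y (restrict D y).
Proof.
  intro i; unfold restrict; destruct excluded_middle_informative; tauto.
Qed.

Lemma restr_vote_rel (J : I -> Prop) (y : family (ballot I)) :
  rgraph (restr vote_rel J) y <-> admissible J y.
Proof.
  split.
  - intros [x [[Zx adm_x] xy]]; split.
    + intro i; destruct (xy i) as [xyJ xyN]; split.
      * intro Ji; rewrite (xyJ Ji); apply Zx; exact Logic.I.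
      * intro yi; apply NNPP; intro nJi; exact (yi (xyN nJi)).
    + intros A KA A_ne AJ yA; apply (adm_x A KA A_ne (fun _ _ => Logic.I)).
      apply (unanimous_restr xy AJ); exact yA.
  - (* outside J, extend y by ballots that vote for nothing *)
    intros [Zy adm_y].
    exists (fun i => if excluded_middle_informative (J i) then y i
                  else Some (fun _ => False)); split; [split |].
    + intro i; split; intros _; [| exact Logic.I].
      destruct excluded_middle_informative as [Ji | _]; [apply Zy, Ji | discriminate].
    + intros A KA A_ne _ xA.
      destruct (classic (forall i, A i -> J i)) as [AJ | nAJ].
      * apply (adm_y A KA A_ne AJ); intros i Ai.
        destruct (xA i Ai) as [v [xv Av]].
        destruct excluded_middle_informative as [_ | nJi];
          [exists v; tauto | contradiction (nJi (AJ i Ai))].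
      * apply not_all_ex_not in nAJ; destruct nAJ as [i nAJi].
        apply imply_to_and in nAJi; destruct nAJi as [Ai nJi].
        destruct (xA i Ai) as [v [xv Av]].
        destruct excluded_middle_informative; [contradiction |].
        injection xv as <-; exact Av.
    + intro i; destruct excluded_middle_informative as [Ji | nJi]; split; try tauto.
      intros _; destruct (y i) eqn:yi; [| reflexivity].
      exfalso; apply nJi, Zy; rewrite yi; discriminate.
Qed.

Lemma admissible_restrict (C J : I -> Prop) (y : family (ballot I)) :
  (forall i, C i -> J i) -> admissible J y -> admissible C (restrict C y).
Proof.
  intros CJ [Zy adm_y]; split.
  - intro i; unfold restrict; destruct excluded_middle_informative as [Ci | nCi].
    + split; [intros _; apply Zy, CJ, Ci | tauto].
    + split; [tauto | intro h; contradiction (h eq_refl)].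
  - intros A KA A_ne AC yA; apply (adm_y A KA A_ne (fun i Ai => CJ i (AC i Ai))).
    apply (unanimous_restr (restrict_isRestr C y) AC); exact yA.
Qed.

Lemma admissible_split (J C L : I -> Prop) :
  (forall i, J i <-> C i \/ L i) ->
  (forall A, K A -> (forall i, A i -> J i) ->
     (forall i, A i -> C i) \/ (forall i, A i -> L i)) ->
  forall y, admissible J y <-> rgraph (rprod (vote_rel_on C) (vote_rel_on L)) y.
Proof.
  intros JCL sep y; split.
  - intros adm_y; split; [intro i; rewrite <- JCL; apply adm_y |].
    split; [exists (restrict C y) | exists (restrict L y)];
      (split; [apply restrict_isRestr | apply (admissible_restrict _ (J := J))]);
      trivial; intros i Hi; apply JCL; tauto.
  - intros [Zy [[z [yz adm_z]] [w [yw adm_w]]]]; split; [intro i; rewrite JCL; apply Zy |].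
    intros A KA A_ne AJ yA; destruct (sep A KA AJ) as [AC | AL].
    + apply (proj2 adm_z A KA A_ne AC), (unanimous_restr yz AC), yA.
    + apply (proj2 adm_w A KA A_ne AL), (unanimous_restr yw AL), yA.
Qed.

Definition vote_for (J B : I -> Prop) : family (ballot I) :=
  fun i => if excluded_middle_informative (J i) then Some (fun A => A = J /\ B i) else None.

Lemma vote_for_inZ (J B : I -> Prop) : inZ J (vote_for J B).
Proof.
  intro i; unfold vote_for; destruct excluded_middle_informative; split;
    solve [discriminate | contradiction | tauto].
Qed.

Lemma vote_for_agree (J B B' : I -> Prop) (i : I) :
  (B i <-> B' i) -> vote_for J B i = vote_for J B' i.
Proof.
  intro BB'; unfold vote_for; destruct excluded_middle_informative; [| reflexivity].
  do 2 f_equal; apply set_ext; tauto.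
Qed.

Lemma votes_for (J B A : I -> Prop) (i : I) :
  votes (vote_for J B) i A <-> J i /\ A = J /\ B i.
Proof.
  unfold votes, vote_for; destruct excluded_middle_informative.
  - split; [intros [v [[= <-] Av]]; tauto | intros [_ Av]; eexists; eauto].
  - split; [intros [v [[=] _]] | tauto].
Qed.

Lemma vote_for_admissible (J B : I -> Prop) :
  (exists i, J i /\ ~ B i) -> admissible J (vote_for J B).
Proof.
  intros [i [Ji nBi]]; split; [apply vote_for_inZ |].
  intros A KA [a Aa] AJ yA.
  destruct (proj1 (votes_for _ _ _ _) (yA a Aa)) as [_ [-> _]].
  apply nBi; destruct (proj1 (votes_for _ _ _ _) (yA i Ji)) as [_ [_ Bi]]; exact Bi.
Qed.

Lemma vote_for_all_not_admissible (J : I -> Prop) :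
  K J -> (exists i, J i) -> ~ admissible J (vote_for J (fun _ => True)).
Proof.
  intros KJ J_ne [_ adm]; apply (adm J KJ J_ne (fun _ Ji => Ji)).
  intros i Ji; apply votes_for; tauto.
Qed.

Lemma in_K_not_scindable (J : I -> Prop) : K J -> ~ scindable (restr vote_rel J).
Proof.
  intros KJ [P [Q [[[p Pp] [[q Qq] [PQ JPQ]]] [R [S [_ [_ [dR [dS [_ eqg]]]]]]]]]].
  simpl in JPQ.
  assert (domRS : forall i, rdom R i \/ rdom S i <-> J i).
  { intro i; rewrite dR, dS, JPQ; reflexivity. }
  assert (inRS : forall B, admissible J (vote_for J B) -> rgraph (rprod R S) (vote_for J B)).
  { intros B adm; apply eqg, restr_vote_rel, adm. }
  apply (vote_for_all_not_admissible KJ (ex_intro _ p (proj2 (JPQ p) (or_introl Pp)))).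
  apply restr_vote_rel, eqg.
  (* where exactly P votes and where exactly Q votes mix into where all of J votes *)
  apply (rprod_mix (x := vote_for J P) (x' := vote_for J Q)).
  - apply inRS, vote_for_admissible; exists q.
    split; [apply JPQ; tauto | intro Pq; exact (PQ q (conj Pq Qq))].
  - apply inRS, vote_for_admissible; exists p.
    split; [apply JPQ; tauto | intro Qp; exact (PQ p (conj Pp Qp))].
  - intro i; rewrite domRS; apply vote_for_inZ.
  - intros i Ri; apply vote_for_agree; apply dR in Ri; tauto.
  - intros i Si; apply vote_for_agree; apply dS in Si; tauto.
Qed.

Hypotheses (K_cs : connective_structure K) (K_int : integral K).

Lemma not_in_K_scindable (J : I -> Prop) : ~ K J -> scindable (restr vote_rel J).
Proof.
  intro nKJ.
  destruct (classic (exists x0, J x0)) as [[x0 Jx0] | J0].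
  2: { exfalso; apply nKJ, (cs_empty K_cs); intros i Ji; apply J0; exists i; exact Ji. }
  set (C := component K J x0); set (L := fun i => J i /\ ~ C i).
  assert (JCL : forall i, J i <-> C i \/ L i).
  { intro i; unfold L; pose proof (@component_sub _ K J x0 i); tauto. }
  assert (L_ne : exists i, L i).
  { apply NNPP; intro L0; apply nKJ.
    replace J with C; [exact (component_in_K K_cs J x0) |].
    apply set_ext; intro i; rewrite JCL; firstorder. }
  exists C, L; split.
  - split; [exists x0; exact (component_mem J x0 K_int Jx0) |].
    split; [exact L_ne | split; [unfold L; tauto | exact JCL]].
  - exists (vote_rel_on C), (vote_rel_on L).
    split; [apply vote_rel_on_wf |]; split; [apply vote_rel_on_wf |].
    split; [reflexivity |]; split; [reflexivity |]; split; [exact JCL |].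
    intro y; rewrite restr_vote_rel; apply admissible_split; [exact JCL |].
    intros A KA AJ; exact (component_separates K_cs J x0 A KA AJ).
Qed.

End Votes.

Theorem mainTheorem1 (I : Type) :
  exists E : I -> Type,
    (forall i, inhabited (E i)) /\
    forall K : (I -> Prop) -> Prop,
      connective_structure K -> integral K ->
      exists R : mrel E, wf R /\ forall J : I -> Prop, conn_struct R J <-> K J.
Proof.
  exists (ballot I); split; [intro i; constructor; exact (fun _ => False) |].
  intros K K_cs K_int; exists (vote_rel K); split; [apply vote_rel_on_wf |].
  intro J; split.
  - intros [_ nsc]; apply NNPP; intro nKJ.
    exact (nsc (not_in_K_scindable K_cs K_int J nKJ)).
  - intro KJ; split; [intros; exact Logic.I | exact (in_K_not_scindable KJ)].
Qed.
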